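(* Let $p,q$ be coprime positive integers with $q\ge 2$. Let $(F_n)_{n\ge0}$ and $(G_n)_{n\ge0}$ be sequences of rational numbers, neither identically zero, each satisfying $X_n=\frac{p}{q}X_{n-1}-X_{n-2}$ for all $n\ge2$. Write $F_n=\frac{f_n}{f_n'}$ and $G_n=\frac{g_n}{g_n'}$ in reduced form. If $F_0G_1-F_1G_0\neq 0$, then $\gcd(f_n,g_n)$ is bounded independently of $n$. *)

From mathcomp Require Import all_boot all_order all_algebra.
Set Implicit Arguments. Unset Strict Implicit. Unset Printing Implicit Defensive.
Import Order.TTheory GRing.Theory Num.Theory.
Local Open Scope ring_scope.

Definition rec_pq (p q : nat) (X : nat -> rat) : Prop :=
  forall n : nat, X n.+2 = (p%:Q / q%:Q) * X n.+1 - X n.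

From mathcomp Require Import all_boot all_order all_algebra.
From mathcomp Require Import ring zify.
Import Order.TTheory GRing.Theory Num.Theory.
Set Implicit Arguments. Unset Strict Implicit.
Local Open Scope ring_scope.

(* Clearing denominators, y_n = C q^n F_n and z_n = C q^n G_n are integer
   solutions of y_(n+2) = p y_(n+1) - q^2 y_n whose Casoratian
   y_n z_(n+1) - y_(n+1) z_n equals q^(2n) M with M <> 0.  A common divisor of
   f_n and g_n divides y_n and z_n, hence q^(2n) M, so it suffices that it is
   eventually coprime to q.  Fix a prime l | q, so l does not divide p, and let
   e = v_l(q) >= 1.  Once v_l(y_(j+1)) <= v_l(y_j) + e for a single j, the term
   p y_(j+1) dominates q^2 y_j from then on and v_l(y_n) stays constant, while
   l | f_n would force v_l(y_n) > n e.  Otherwise v_l(y_n) >= (e + 1) n for all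
   n, and this cannot happen for both y and z: the valuation of the Casoratian
   would then outgrow 2 n e + v_l(M). *)

Definition zlogn (l : nat) (x : int) : nat := logn l `|x|.

Section IntValuation.

Variable l : nat.
Hypothesis l_prime : prime l.

Lemma pfactor_dvdz k x : x != 0 -> ((l ^ k)%:Z %| x)%Z = (k <= zlogn l x)%N.
Proof. by move=> x0; rewrite dvdzE /= pfactor_dvdn // absz_gt0. Qed.

Lemma pfactor_dvdzz x : ((l ^ zlogn l x)%:Z %| x)%Z.
Proof. exact: pfactor_dvdnn. Qed.

Lemma zlognM x y : x != 0 -> y != 0 -> zlogn l (x * y) = (zlogn l x + zlogn l y)%N.
Proof. by move=> x0 y0; rewrite /zlogn abszM lognM // absz_gt0. Qed.

Lemma zlogn_Gauss c x : ~~ (l %| `|c|)%N -> zlogn l (c * x) = zlogn l x.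
Proof.
move=> l_c; have [-> | x0] := eqVneq x 0; first by rewrite mulr0.
have c0 : c != 0 by apply: contraNneq l_c => ->.
by rewrite zlognM // /zlogn logn_coprime // prime_coprime.
Qed.

Lemma zlognD_dominant x y : x != 0 -> ((l ^ (zlogn l x).+1)%:Z %| y)%Z ->
  x + y != 0 /\ zlogn l (x + y) = zlogn l x.
Proof.
move=> x0 dvd_y.
have dvd_y' : ((l ^ zlogn l x)%:Z %| y)%Z.
  by apply: dvdz_trans dvd_y; rewrite dvdzE /= dvdn_exp2l.
have ndvd_xy : ~~ ((l ^ (zlogn l x).+1)%:Z %| x + y)%Z.
  by rewrite rpredDr // pfactor_dvdz // ltnn.
have xy0 : x + y != 0 by apply: contraNneq ndvd_xy => ->; apply: dvdz0.
split=> //; apply/eqP; rewrite eqn_leq -ltnS ltnNge -!pfactor_dvdz //.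
by rewrite ndvd_xy rpredD ?pfactor_dvdzz.
Qed.

End IntValuation.

Definition int_rec (a b : int) (y : nat -> int) : Prop :=
  forall n, y n.+2 = a * y n.+1 - b * y n.

Lemma casoratian_int_rec a b y z : int_rec a b y -> int_rec a b z ->
  forall n, y n * z n.+1 - y n.+1 * z n = b ^+ n * (y 0%N * z 1%N - y 1%N * z 0%N).
Proof.
move=> recy recz; elim=> [|n IHn]; first by rewrite expr0 mul1r.
by rewrite recy recz exprS -mulrA -IHn; ring.
Qed.

Section PrimeDividingTheDenominator.

Variables p q l : nat.
Hypotheses (l_prime : prime l) (l_dvd_q : (l %| q)%N) (l_ndvd_p : ~~ (l %| p)%N).
Hypothesis q_gt0 : (0 < q)%N.

Let e := logn l q.

Let e_gt0 : (0 < e)%N.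
Proof. by rewrite logn_gt0 mem_primes l_prime q_gt0 l_dvd_q. Qed.

Definition steep (y : nat -> int) (j : nat) : bool :=
  (y j != 0) && ((l ^ (zlogn l (y j) + e).+1)%:Z %| y j.+1)%Z.

Lemma steepE y j : y j != 0 -> y j.+1 != 0 ->
  steep y j = (zlogn l (y j) + e < zlogn l (y j.+1))%N.
Proof. by move=> yj0 yj10; rewrite /steep yj0 pfactor_dvdz. Qed.

Lemma steep_zlogn_ge y n : (forall j, (j <= n)%N -> steep y j) ->
  (e.+1 * n <= zlogn l (y n))%N.
Proof.
elim: n => [|n IHn] steep_y; first by rewrite muln0.
have /andP[yn0 _] := steep_y n (leqnSn n).
have /andP[yn10 _] := steep_y n.+1 (leqnn _).
have := steep_y n (leqnSn n); rewrite steepE //.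
have := IHn (fun j jn => steep_y j (leqW jn)); lia.
Qed.

Lemma flat_step y j : int_rec p%:Z (q%:Z ^+ 2) y ->
  ~~ steep y j -> (y j != 0) || (y j.+1 != 0) ->
  [/\ y j.+1 != 0, y j.+2 != 0, zlogn l (y j.+2) = zlogn l (y j.+1)
    & ~~ steep y j.+1].
Proof.
move=> recy nsteep nz.
have p_neq0 : p%:Z != 0 by apply: contraNneq l_ndvd_p => -[->].
suff [yj10 yj20 v_eq] :
    [/\ y j.+1 != 0, y j.+2 != 0 & zlogn l (y j.+2) = zlogn l (y j.+1)].
  by split=> //; rewrite steepE // v_eq -ltnNge ltnS leq_addr.
have [yj0 | yj0] := eqVneq (y j) 0.
  move: nz; rewrite yj0 eqxx /= => yj10.
  have yj2E : y j.+2 = p%:Z * y j.+1 by rewrite recy yj0 mulr0 subr0.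
  by rewrite yj2E zlogn_Gauss // mulf_neq0.
have yj10 : y j.+1 != 0 by apply: contraNneq nsteep => yj1; rewrite /steep yj1 yj0 dvdz0.
move: nsteep; rewrite steepE // -leqNgt => v_le.
have q2yj0 : q%:Z ^+ 2 * y j != 0 by rewrite mulf_neq0 // expf_neq0 // -lt0n.
have dvd_q2yj : ((l ^ (zlogn l (p%:Z * y j.+1)).+1)%:Z %| - (q%:Z ^+ 2 * y j))%Z.
  rewrite rpredN pfactor_dvdz // zlogn_Gauss // zlognM //; last first.
    by rewrite expf_neq0 // -lt0n.
  by move: v_le; rewrite /zlogn abszX lognX /= -/e; lia.
have pyj10 : p%:Z * y j.+1 != 0 by rewrite mulf_neq0.
have [] := zlognD_dominant l_prime pyj10 dvd_q2yj.
by rewrite -recy zlogn_Gauss.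
Qed.

Lemma not_steep_eventually_ndvd y j : int_rec p%:Z (q%:Z ^+ 2) y ->
  ~~ steep y j -> (y j != 0) || (y j.+1 != 0) ->
  exists N, forall n, (N <= n)%N -> ~~ ((l ^ (n * e).+1)%:Z %| y n)%Z.
Proof.
move=> recy nsteep nz.
have flat k : [/\ ~~ steep y (j + k), y (j + k).+1 != 0
                 & zlogn l (y (j + k).+1) = zlogn l (y j.+1)].
  elim: k => [|k [nsteep_k yk0 v_k]].
    by rewrite addn0; case: (flat_step recy nsteep nz).
  have [_ yk20 v_eq nsteep_k1] := flat_step recy nsteep_k (introT orP (or_intror yk0)).
  by rewrite addnS; split=> //; rewrite v_eq.
exists (maxn j.+1 (zlogn l (y j.+1))) => n; rewrite geq_max => /andP[jn vn].
have [_ yn0 v_n] := flat (n - j.+1)%N.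
rewrite -addSn subnKC // in yn0 v_n.
rewrite pfactor_dvdz // v_n -ltnNge ltnS (leq_trans vn) // leq_pmulr //.
Qed.

Section Pair.

Variables (y z : nat -> int) (M : int).
Hypotheses (recy : int_rec p%:Z (q%:Z ^+ 2) y) (recz : int_rec p%:Z (q%:Z ^+ 2) z).
Hypothesis casoratian : forall n, y n * z n.+1 - y n.+1 * z n = (q%:Z ^+ 2) ^+ n * M.
Hypothesis M_neq0 : M != 0.

Lemma casoratian_not_steep : exists j, ~~ steep y j || ~~ steep z j.
Proof.
(* At n = v_l(M), steepness up to n would give the Casoratian valuation
   at least 2 n (e + 1) + e + 1 > 2 n e + n. *)
set n := zlogn l M.
have [/allP steep_yz | /allPn[j _]] :=
  boolP (all (fun j => steep y j && steep z j) (iota 0 n.+1)).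
  2: by rewrite negb_and; exists j.
have steep_y j : (j <= n)%N -> steep y j.
  by move=> jn; have /steep_yz/andP[] : j \in iota 0 n.+1 by rewrite mem_iota.
have steep_z j : (j <= n)%N -> steep z j.
  by move=> jn; have /steep_yz/andP[] : j \in iota 0 n.+1 by rewrite mem_iota.
have /andP[yn0 dvd_y] := steep_y n (leqnn n).
have /andP[zn0 dvd_z] := steep_z n (leqnn n).
have : ((l ^ (zlogn l (y n) + zlogn l (z n) + e).+1)%:Z %| (q%:Z ^+ 2) ^+ n * M)%Z.
  rewrite -casoratian rpredB //.
    by rewrite -addnA -addnS expnD PoszM dvdz_mul ?pfactor_dvdzz.
  by rewrite addnAC -addSn expnD PoszM dvdz_mul ?pfactor_dvdzz.
have qn0 : (q%:Z ^+ 2) ^+ n != 0 by rewrite !expf_neq0 // -lt0n.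
have v_qn : zlogn l ((q%:Z ^+ 2) ^+ n) = (n * (2 * e))%N by rewrite /zlogn !abszX !lognX.
rewrite pfactor_dvdz ?mulf_neq0 // zlognM // v_qn -/n.
have := steep_zlogn_ge steep_y; have := steep_zlogn_ge steep_z; have := e_gt0.
clear; lia.
Qed.

Lemma eventually_ndvd_both : exists N, forall n, (N <= n)%N ->
  ~~ ((l ^ (n * e).+1)%:Z %| y n)%Z || ~~ ((l ^ (n * e).+1)%:Z %| z n)%Z.
Proof.
have cas_neq0 n : y n * z n.+1 - y n.+1 * z n != 0.
  by rewrite casoratian mulf_neq0 // !expf_neq0 // -lt0n.
have nz_y j : (y j != 0) || (y j.+1 != 0).
  rewrite -negb_and; apply: contra (cas_neq0 j) => /andP[/eqP-> /eqP->].
  by rewrite !mul0r subr0.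
have nz_z j : (z j != 0) || (z j.+1 != 0).
  rewrite -negb_and; apply: contra (cas_neq0 j) => /andP[/eqP-> /eqP->].
  by rewrite !mulr0 subr0.
have [j /orP[nsteep | nsteep]] := casoratian_not_steep.
  have [N ndvd] := not_steep_eventually_ndvd recy nsteep (nz_y j).
  by exists N => n /ndvd ->.
have [N ndvd] := not_steep_eventually_ndvd recz nsteep (nz_z j).
by exists N => n /ndvd ->; rewrite orbT.
Qed.

End Pair.

End PrimeDividingTheDenominator.

Lemma denq_dvd_scale_int (x : rat) (C : int) : (denq x %| C)%Z -> C%:~R * x \is a Num.int.
Proof.
by case/dvdzP=> k ->; rewrite rmorphM /= -mulrA [_ * x]mulrC -numqE rpredM ?intr_int.
Qed.

Lemma rec_pq_clear_denominators p q (X : nat -> rat) (C : int) :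
  (0 < q)%N -> rec_pq p q X -> (denq (X 0%N) %| C)%Z -> (denq (X 1%N) %| C)%Z ->
  exists y : nat -> int, int_rec p%:Z (q%:Z ^+ 2) y /\
    forall n, (y n)%:~R = (C * q%:Z ^+ n)%:~R * X n.
Proof.
move=> q_gt0 recX den0 den1.
pose s n := (C * q%:Z ^+ n)%:~R * X n.
have s_rec n : s n.+2 = p%:R * s n.+1 - q%:R ^+ 2 * s n.
  have q0 : q%:R != 0 :> rat by rewrite pnatr_eq0 -lt0n.
  by rewrite /s recX !rmorphM !rmorphXn /= !exprS; field.
have s_int n : s n \is a Num.int /\ s n.+1 \is a Num.int.
  elim: n => [|n [s_n s_n1]].
    rewrite /s expr0 expr1 mulr1 rmorphM /= mulrAC.
    split; first exact: denq_dvd_scale_int den0.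
    by rewrite rpredM ?intr_int ?(denq_dvd_scale_int den1).
  by split=> //; rewrite s_rec; apply: rpredB; apply: rpredM; rewrite ?rpredX ?natr_int.
exists (fun n => numq (s n)); split=> [n | n]; last exact: numqK (s_int n).1.
apply: (@intr_inj rat).
by rewrite rmorphB !rmorphM /= !numqK ?(s_int _).1 // s_rec expr2.
Qed.

Lemma dvdz_scaled_num (x : rat) (k w d : int) : w%:~R = k%:~R * x ->
  coprimez d (denq x) -> (d %| numq x * k)%Z -> (d %| w)%Z.
Proof.
move=> wE d_den; have -> : numq x * k = w * denq x.
  by apply: (@intr_inj rat); rewrite !rmorphM /= wE numqE; ring.
by rewrite Gauss_dvdzl.
Qed.

Lemma numq_dvd_scaled (x : rat) (k w : int) : w%:~R = k%:~R * x -> (numq x %| w)%Z.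
Proof.
move=> wE; apply: dvdz_scaled_num wE _ (dvdz_mulr _ (dvdzz _)).
by rewrite coprimezE coprime_num_den.
Qed.

Lemma pfactor_dvd_scaled l m (x : rat) (k w : int) : prime l ->
  (l %| `|numq x|)%N -> ((l ^ m)%:Z %| k)%Z -> w%:~R = k%:~R * x ->
  ((l ^ m.+1)%:Z %| w)%Z.
Proof.
move=> l_prime l_num lm_k wE; apply: dvdz_scaled_num wE _ _.
  by rewrite coprimezE /= coprime_pexpl // (coprime_dvdl l_num) ?coprime_num_den.
by rewrite expnS PoszM; apply: dvdz_mul.
Qed.

Lemma eventually_all (T : eqType) (s : seq T) (P : T -> nat -> Prop) :
  (forall l, l \in s -> exists N, forall n, (N <= n)%N -> P l n) ->
  exists N, forall n, (N <= n)%N -> forall l, l \in s -> P l n.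
Proof.
elim: s => [|a s IHs] evP; first by exists 0%N.
have [Na Pa] := evP a (mem_head a s).
have [Ns Ps] : exists N, forall n, (N <= n)%N -> forall l, l \in s -> P l n.
  by apply: IHs => l ls; apply: evP; rewrite inE ls orbT.
exists (maxn Na Ns) => n; rewrite geq_max => /andP[Na_n Ns_n] l.
by rewrite inE => /predU1P[-> | ls]; [exact: Pa | exact: Ps].
Qed.

Lemma bounded_of_eventually (f : nat -> nat) N B :
  (forall n, (N <= n)%N -> (f n <= B)%N) -> exists B', forall n, (f n <= B')%N.
Proof.
move=> f_le; exists (maxn B (\max_(i < N) f i)) => n.
have [n_lt_N | /f_le f_le_B] := ltnP n N; last exact: leq_trans f_le_B (leq_maxl _ _).
by apply: leq_trans (leq_maxr _ _); apply: (leq_bigmax_cond (Ordinal n_lt_N)).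
Qed.

Section ClearedDenominators.

Variables (p q : nat) (F G : nat -> rat) (C : int) (y z : nat -> int).
Hypotheses (q_gt0 : (0 < q)%N) (coprime_pq : coprime p q).
Hypotheses (recy : int_rec p%:Z (q%:Z ^+ 2) y) (recz : int_rec p%:Z (q%:Z ^+ 2) z).
Hypothesis yE : forall n, (y n)%:~R = (C * q%:Z ^+ n)%:~R * F n.
Hypothesis zE : forall n, (z n)%:~R = (C * q%:Z ^+ n)%:~R * G n.

Local Notation M := (y 0%N * z 1%N - y 1%N * z 0%N).
Local Notation gcd_num n := (gcdn `|numq (F n)| `|numq (G n)|).

Lemma scaled_casoratian0 : M%:~R = C%:~R ^+ 2 * q%:R * (F 0%N * G 1%N - F 1%N * G 0%N).
Proof. by rewrite rmorphB !rmorphM /= yE zE yE zE !rmorphM /=; ring. Qed.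

Lemma eventually_coprime_gcd_num : M != 0 ->
  exists N, forall n, (N <= n)%N -> (0 < gcd_num n)%N -> coprime q (gcd_num n).
Proof.
move=> M_neq0.
have [N ndvd] : exists N, forall n, (N <= n)%N -> forall l, l \in primes q ->
    ~~ ((l ^ (n * logn l q).+1)%:Z %| y n)%Z || ~~ ((l ^ (n * logn l q).+1)%:Z %| z n)%Z.
  apply: eventually_all => l; rewrite mem_primes => /and3P[l_prime _ l_q].
  have l_p : ~~ (l %| p)%N.
    by rewrite -prime_coprime // (coprime_dvdl l_q) // coprime_sym.
  exact: (eventually_ndvd_both l_prime l_q l_p q_gt0 recy recz
    (casoratian_int_rec recy recz) M_neq0).
exists N => n /ndvd ndvd_n d_gt0; rewrite coprime_has_primes //.
apply/hasPn => l; rewrite mem_primes => /and3P[l_prime _ l_d]; apply/negP => l_q.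
have lqn : ((l ^ (n * logn l q))%:Z %| C * q%:Z ^+ n)%Z.
  by rewrite mulnC expnM dvdz_mull // dvdzE /= abszX dvdn_exp2r // pfactor_dvdnn.
have l_F := dvdn_trans l_d (dvdn_gcdl _ _); have l_G := dvdn_trans l_d (dvdn_gcdr _ _).
move: l_q (ndvd_n l l_q); rewrite mem_primes => /and3P[_ _ l_q].
by rewrite (pfactor_dvd_scaled _ l_F lqn (yE n)) ?(pfactor_dvd_scaled _ l_G lqn (zE n)).
Qed.

Lemma gcd_num_le_casoratian n : M != 0 -> coprime q (gcd_num n) -> (gcd_num n <= `|M|)%N.
Proof.
move=> M_neq0 coprime_qd.
have d_y : ((gcd_num n)%:Z %| y n)%Z :=
  dvdn_trans (dvdn_gcdl _ _) (numq_dvd_scaled (yE n)).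
have d_z : ((gcd_num n)%:Z %| z n)%Z :=
  dvdn_trans (dvdn_gcdr _ _) (numq_dvd_scaled (zE n)).
have : ((gcd_num n)%:Z %| (q%:Z ^+ 2) ^+ n * M)%Z.
  by rewrite -(casoratian_int_rec recy recz) rpredB ?(dvdz_mulr _ d_y) ?(dvdz_mull _ d_z).
rewrite dvdzE abszM !abszX /= Gauss_dvdr.
  by apply: dvdn_leq; rewrite absz_gt0.
by apply/coprimeXr/coprimeXr; rewrite coprime_sym.
Qed.

Lemma eventually_gcd_num_le : M != 0 ->
  exists N, forall n, (N <= n)%N -> (gcd_num n <= `|M|)%N.
Proof.
move=> M_neq0; have [N coprime_q] := eventually_coprime_gcd_num M_neq0.
exists N => n /coprime_q coprime_qn.
have [-> // | d_gt0] := posnP (gcd_num n).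
exact: gcd_num_le_casoratian M_neq0 (coprime_qn d_gt0).
Qed.

End ClearedDenominators.

Theorem lemma3p3 (p q : nat) (F G : nat -> rat) :
  (0 < p)%N -> (2 <= q)%N -> coprime p q ->
  (exists n, F n != 0) -> (exists n, G n != 0) ->
  rec_pq p q F -> rec_pq p q G ->
  F 0%N * G 1%N - F 1%N * G 0%N != 0 ->
  exists B : nat, forall n : nat,
    (gcdn `|numq (F n)|%N `|numq (G n)|%N <= B)%N.
Proof.
move=> _ q_ge2 coprime_pq _ _ recF recG W_neq0.
have q_gt0 : (0 < q)%N by apply: ltnW.
pose C := denq (F 0%N) * denq (F 1%N) * denq (G 0%N) * denq (G 1%N).
have [y [recy yE]] := rec_pq_clear_denominators (C := C) q_gt0 recF
  (dvdz_mulr _ (dvdz_mulr _ (dvdz_mulr _ (dvdzz _))))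
  (dvdz_mulr _ (dvdz_mulr _ (dvdz_mull _ (dvdzz _)))).
have [z [recz zE]] := rec_pq_clear_denominators (C := C) q_gt0 recG
  (dvdz_mulr _ (dvdz_mull _ (dvdzz _))) (dvdz_mull _ (dvdzz _)).
have C_neq0 : C != 0 by rewrite !mulf_neq0 ?denq_neq0.
have q_neq0 : q%:R != 0 :> rat by rewrite pnatr_eq0 -lt0n.
have M_neq0 : y 0%N * z 1%N - y 1%N * z 0%N != 0.
  by rewrite -(intr_eq0 rat) (scaled_casoratian0 yE zE) !mulf_neq0 ?expf_neq0 ?intr_eq0.
have [N gcd_le] := eventually_gcd_num_le q_gt0 coprime_pq recy recz yE zE M_neq0.
exact: bounded_of_eventually gcd_le.
Qed.
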